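(* Let $\mathcal H$ be a real Hilbert space and $\hat H\colon\operatorname{dom}(\hat H)\subset\mathcal H\to\mathcal H$ a densely defined self-adjoint linear operator. Let $\psi\in\operatorname{dom}(\hat H)\setminus\{0\}$ (not necessarily normalized) and let \[ d=\frac{2}{\|\psi\|}\big[\hat H\psi-E(\psi)\psi\big] \] be the $L^2$ gradient of $E$ on the unit sphere at $\psi/\|\psi\|$. Assume $d\neq0$ and $d\in\operatorname{dom}(\hat H)$. Then the optimal step size \[ \eta^*=\operatorname{argmin}_{\eta>0}E(\psi-\eta d) \] is given by \[ \eta^*=\frac{\|\psi\|}{E(d)-E(\psi)+\sqrt{(E(d)-E(\psi))^2+\|d\|^2}}. \]
   Context: For $\phi\in\operatorname{dom}(\hat H)\setminus\{0\}$ the energy (Rayleigh quotient) is $E(\phi)=\langle\phi,\hat H\phi\rangle/\langle\phi,\phi\rangle$, and $\|\cdot\|$ is the norm of $\mathcal H$. *)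

From HB Require Import structures.
From mathcomp Require Import all_boot all_order all_algebra.
From mathcomp Require Import reals.
Set Implicit Arguments. Unset Strict Implicit. Unset Printing Implicit Defensive.
Import Order.TTheory GRing.Theory Num.Theory.
Local Open Scope ring_scope.

Section Hilbert.
Variables (R : realType) (V : lmodType R).

Definition ipnorm (inner : V -> V -> R) (x : V) : R := Num.sqrt (inner x x).

Definition is_inner_product (inner : V -> V -> R) : Prop :=
  [/\ (forall x y, inner x y = inner y x),
      (forall a x y z, inner (a *: x + y) z = a * inner x z + inner y z),
      (forall x, 0 <= inner x x) &
      (forall x, inner x x = 0 -> x = 0)].

Definition ip_complete (inner : V -> V -> R) : Prop :=
  forall u : nat -> V,
    (forall e : R, 0 < e -> exists N, forall m n, (N <= m)%N -> (N <= n)%N ->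
        ipnorm inner (u m - u n) < e) ->
    exists l : V, forall e : R, 0 < e -> exists N, forall n, (N <= n)%N ->
        ipnorm inner (u n - l) < e.

Definition is_hilbert (inner : V -> V -> R) : Prop :=
  is_inner_product inner /\ ip_complete inner.

Definition is_subspace (D : V -> Prop) : Prop :=
  [/\ D 0, (forall x y, D x -> D y -> D (x + y)) &
      (forall (a : R) x, D x -> D (a *: x))].

Definition is_dense (inner : V -> V -> R) (D : V -> Prop) : Prop :=
  forall x e, 0 < e -> exists y, D y /\ ipnorm inner (x - y) < e.

Definition linear_on (D : V -> Prop) (H : V -> V) : Prop :=
  forall (a : R) x y, D x -> D y -> H (a *: x + y) = a *: H x + H y.

(* A densely defined linear operator (D, H) is self-adjoint: its adjoint
   (y in dom(H^* ) with H^* y = z iff <H x, y> = <x, z> for all x in D)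
   has the same domain and agrees with H. *)
Definition self_adjoint (inner : V -> V -> R) (D : V -> Prop) (H : V -> V) : Prop :=
  forall y z, (forall x, D x -> inner (H x) y = inner x z) <-> (D y /\ z = H y).

Definition energy (inner : V -> V -> R) (H : V -> V) (phi : V) : R :=
  inner phi (H phi) / inner phi phi.

Definition is_argmin_pos (f : R -> R) (eta : R) : Prop :=
  0 < eta /\ forall eta', 0 < eta' -> f eta <= f eta'.

End Hilbert.

(* Write d = (2/|psi|) r with r = H psi - E(psi) psi the residual.  Since r is
   orthogonal to psi and <r, H psi> = |r|^2, self-adjointness reduces the energy
   along the line psi - t d to the rational function
     t |-> (E n^2 - t n m + t^2 G m) / (n^2 + t^2 m),
   with n = |psi|, m = |d|^2, E = E(psi), G = E(d).  Writing g = G - E and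
   s = sqrt (g^2 + m), this equals E + (g - s)/2 + (m (g + s)/2) (t - t0)^2 / (n^2 + t^2 m)
   with t0 = n / (g + s) > 0, so t0 is the unique minimiser over t > 0. *)
From mathcomp Require Import all_boot all_order all_algebra.
From mathcomp Require Import reals ring lra.

Set Implicit Arguments.
Unset Strict Implicit.
Unset Printing Implicit Defensive.
Import Order.TTheory GRing.Theory Num.Theory.
Local Open Scope ring_scope.

Section ArgminRatio.
Variable R : realType.

Lemma is_argmin_pos_sqr_dev (f w : R -> R) (c K t0 : R) :
  0 < K -> 0 < t0 -> (forall t, 0 < w t) ->
  (forall t, f t = c + K * ((t - t0) ^+ 2 / w t)) ->
  forall eta, is_argmin_pos f eta <-> eta = t0.
Proof.
move=> K_gt0 t0_gt0 w_gt0 fE eta; split.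
- case=> _ /(_ t0 t0_gt0); rewrite !fE subrr expr0n mul0r mulr0 addr0.
  rewrite gerDl pmulr_rle0 // ler_pdivrMr // mul0r => sqr_le0.
  have /eqP : (eta - t0) ^+ 2 = 0 by apply: le_anti; rewrite sqr_le0 sqr_ge0.
  by rewrite sqrf_eq0 subr_eq0 => /eqP.
- move=> ->; split=> // t _; rewrite !fE subrr expr0n mul0r mulr0 addr0 lerDl.
  by rewrite mulr_ge0 ?divr_ge0 ?sqr_ge0 ?ltW.
Qed.

Lemma is_argmin_pos_rayleigh_ratio (n m E G : R) (f : R -> R) :
  0 < n -> 0 < m ->
  (forall t, f t = (E * n ^+ 2 - t * n * m + t ^+ 2 * G * m) / (n ^+ 2 + t ^+ 2 * m)) ->
  forall eta, is_argmin_pos f eta <->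
    eta = n / ((G - E) + Num.sqrt ((G - E) ^+ 2 + m)).
Proof.
move=> n_gt0 m_gt0 fE.
set g := G - E; set s := Num.sqrt _.
have s2E : s ^+ 2 = g ^+ 2 + m by rewrite sqr_sqrtr // addr_ge0 ?sqr_ge0 ?ltW.
have s_ge0 : 0 <= s := sqrtr_ge0 _.
have gs_gt0 : 0 < g + s by nra.
have den_gt0 t : 0 < n ^+ 2 + t ^+ 2 * m by nra.
apply: (@is_argmin_pos_sqr_dev _ (fun t => n ^+ 2 + t ^+ 2 * m)
  (E + (g - s) / 2) (m * (g + s) / 2)).
- by rewrite !divr_gt0 ?mulr_gt0.
- by rewrite divr_gt0.
- exact: den_gt0.
move=> t; rewrite fE.
have mE : m = s ^+ 2 - g ^+ 2 by lra.
have GE : G = g + E by rewrite /g; ring.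
have := den_gt0 t; rewrite GE mE => /lt0r_neq0 den_neq0.
by field; rewrite den_neq0 lt0r_neq0.
Qed.

End ArgminRatio.

Section InnerProduct.
Variables (R : realType) (V : lmodType R) (inner : V -> V -> R).
Hypothesis inner_ip : is_inner_product inner.

Lemma inner_sym x y : inner x y = inner y x.
Proof. by case: inner_ip. Qed.

Lemma inner0l z : inner 0 z = 0.
Proof.
case: inner_ip => _ lin _ _.
have := lin 1 0 0 z; rewrite scale1r addr0 mul1r => h.
by apply: (@addrI _ (inner 0 z)); rewrite addr0 -h.
Qed.

Lemma innerDl x y z : inner (x + y) z = inner x z + inner y z.
Proof. by case: inner_ip => _ lin _ _; have := lin 1 x y z; rewrite scale1r mul1r. Qed.

Lemma innerZl a x z : inner (a *: x) z = a * inner x z.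
Proof.
by case: inner_ip => _ lin _ _; have := lin a x 0 z; rewrite addr0 inner0l addr0.
Qed.

Lemma innerNl x z : inner (- x) z = - inner x z.
Proof. by rewrite -scaleN1r innerZl mulN1r. Qed.

Lemma innerDr x y z : inner x (y + z) = inner x y + inner x z.
Proof. by rewrite inner_sym innerDl !(inner_sym x). Qed.

Lemma innerZr a x z : inner x (a *: z) = a * inner x z.
Proof. by rewrite inner_sym innerZl inner_sym. Qed.

Lemma innerNr x z : inner x (- z) = - inner x z.
Proof. by rewrite inner_sym innerNl inner_sym. Qed.

Lemma inner_eq0 x : (inner x x == 0) = (x == 0).
Proof.
case: inner_ip => _ _ _ def.
by apply/eqP/eqP => [/def | ->]; last exact: inner0l.
Qed.

Lemma inner_gt0 x : x != 0 -> 0 < inner x x.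
Proof. by case: inner_ip => _ _ ge0 _ x_neq0; rewrite lt0r inner_eq0 x_neq0 ge0. Qed.

Lemma ipnorm_gt0 x : x != 0 -> 0 < ipnorm inner x.
Proof. by move=> /inner_gt0; rewrite sqrtr_gt0. Qed.

Lemma sqr_ipnorm x : ipnorm inner x ^+ 2 = inner x x.
Proof. by case: inner_ip => _ _ ge0 _; rewrite sqr_sqrtr. Qed.

Variable H : V -> V.

(* Also true at [x = 0], where [energy] divides by zero and both sides vanish. *)
Lemma energyK x : energy inner H x * inner x x = inner x (H x).
Proof.
have [-> | x_neq0] := eqVneq x 0; first by rewrite !inner0l mulr0.
by rewrite divfK // inner_eq0.
Qed.

Lemma inner_residual x : inner x (H x - energy inner H x *: x) = 0.
Proof. by rewrite innerDr innerNr innerZr energyK subrr. Qed.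

Lemma inner_residual_H x (r := H x - energy inner H x *: x) :
  inner r (H x) = inner r r.
Proof.
by rewrite /r [in RHS]innerDr innerNr innerZr (inner_sym _ x) inner_residual
  mulr0 subr0.
Qed.

Variable D : V -> Prop.
Hypotheses (H_lin : linear_on D H) (H_sa : self_adjoint inner D H).

Lemma self_adjoint_sym x y : D x -> D y -> inner (H x) y = inner x (H y).
Proof. by move=> Dx Dy; have [_ /(_ (conj Dy erefl))] := H_sa y (H y); apply. Qed.

Lemma energy_line x y t : D x -> D y -> inner x y = 0 ->
  energy inner H (x - t *: y) =
  (inner x (H x) - 2 * t * inner y (H x) + t ^+ 2 * inner y (H y))
    / (inner x x + t ^+ 2 * inner y y).
Proof.
move=> Dx Dy xy0; rewrite /energy.
have -> : H (x - t *: y) = H x - t *: H y.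
  by rewrite addrC -scaleNr H_lin // scaleNr addrC.
rewrite !(innerDl, innerDr, innerNl, innerNr, innerZl, innerZr).
rewrite -(self_adjoint_sym Dx Dy) (inner_sym (H x) y) (inner_sym y x) xy0.
by congr (_ / _); ring.
Qed.

Lemma energy_along_gradient psi t :
  D psi -> psi != 0 ->
  let d := (2 / ipnorm inner psi) *: (H psi - energy inner H psi *: psi) in
  D d ->
  let n := ipnorm inner psi in
  energy inner H (psi - t *: d) =
  (energy inner H psi * n ^+ 2 - t * n * inner d d + t ^+ 2 * energy inner H d * inner d d)
    / (n ^+ 2 + t ^+ 2 * inner d d).
Proof.
move=> Dpsi psi_neq0 d Dd n.
have n_neq0 : n != 0 by rewrite gt_eqF ?ipnorm_gt0.
have psi_d : inner psi d = 0 by rewrite innerZr inner_residual mulr0.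
have d_Hpsi : 2 * inner d (H psi) = n * inner d d.
  by rewrite !innerZl !innerZr inner_residual_H -/n; field; rewrite n_neq0.
rewrite energy_line // -(energyK psi) -(energyK d) (mulrAC 2) d_Hpsi /n sqr_ipnorm.
by congr (_ / _); ring.
Qed.

End InnerProduct.

Theorem mainTheorem3 (R : realType) (V : lmodType R) (inner : V -> V -> R)
  (D : V -> Prop) (H : V -> V) (psi : V) :
  is_hilbert inner ->
  is_subspace D -> is_dense inner D -> linear_on D H -> self_adjoint inner D H ->
  D psi -> psi <> 0 ->
  let d := (2 / ipnorm inner psi) *: (H psi - energy inner H psi *: psi) in
  d <> 0 -> D d ->
  let gap := energy inner H d - energy inner H psi in
  forall eta : R,
    is_argmin_pos (fun t => energy inner H (psi - t *: d)) eta <->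
    eta = ipnorm inner psi /
            (gap + Num.sqrt (gap ^+ 2 + ipnorm inner d ^+ 2)).
Proof.
move=> [ip _] _ _ H_lin H_sa Dpsi /eqP psi_neq0 d /eqP d_neq0 Dd gap eta.
rewrite /gap (sqr_ipnorm ip).
apply: (@is_argmin_pos_rayleigh_ratio _ (ipnorm inner psi) (inner d d)
  (energy inner H psi) (energy inner H d)).
- exact: ipnorm_gt0.
- exact: inner_gt0.
- by move=> t; rewrite (energy_along_gradient ip H_lin H_sa).
Qed.
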